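(* Assume that $\mathcal C$ is arithmetically Cohen–Macaulay. Then for all $(y_1,y_2),(z_1,z_2)\in \mathrm{AP}_{\mathcal S}$, \[(y_1,y_2)\le_{\mathcal S}(z_1,z_2)\iff y_1\le_1 z_1 \text{ and } y_2\le_2 z_2 .\]
   Context: Let $k$ be an infinite field, $d\ge 1$, and $0=a_0<a_1<\dots<a_n=d$ integers with $\gcd(a_1,\dots,a_n)=1$. Put $\mathbf a_i=(a_i,d-a_i)\in\mathbb N^2$ for $0\le i\le n$. Let $\mathcal S_1\subseteq\mathbb N$ be the numerical semigroup generated by $a_1,\dots,a_n$, $\mathcal S_2\subseteq\mathbb N$ the numerical semigroup generated by $d,d-a_1,\dots,d-a_{n-1}$, and $\mathcal S\subseteq\mathbb N^2$ the monoid generated by $\mathbf a_0,\dots,\mathbf a_n$. Partial orders: for $i=1,2$, $y\le_i z$ iff $z-y\in\mathcal S_i$; and $\mathbf y\le_{\mathcal S}\mathbf z$ iff $\mathbf z-\mathbf y\in\mathcal S$. Apery sets: $\mathrm{Ap}_i=\{y\in\mathcal S_i: y-d\notin\mathcal S_i\}$ for $i=1,2$, and $\mathrm{AP}_{\mathcal S}=\{\mathbf y\in\mathcal S: \mathbf y-\mathbf a_0\notin\mathcal S,\ \mathbf y-\mathbf a_n\notin\mathcal S\}$. Let $I_{\mathcal A}\subseteq k[x_0,\dots,x_n]$ be the kernel of the $k$-algebra map $x_i\mapsto u^{a_i}v^{d-a_i}$, and $k[\mathcal C]=k[x_0,\dots,x_n]/I_{\mathcal A}$ (the coordinate ring of the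 projective monomial curve $\mathcal C\subset\mathbb P^n_k$ parametrized by $x_i=u^{a_i}v^{d-a_i}$). $\mathcal C$ is called arithmetically Cohen–Macaulay if $k[\mathcal C]$ is Cohen–Macaulay. *)

From HB Require Import structures.
From mathcomp Require Import all_boot all_order all_algebra.
From mathcomp Require Import mpoly.
Set Implicit Arguments. Unset Strict Implicit. Unset Printing Implicit Defensive.
Import GRing.Theory.
Local Open Scope ring_scope.

(* Ideals are predicates R -> Prop. Everything about the quotient ring R/I is
   expressed through ideals of R containing I (correspondence theorem). *)
Section CommAlg.
Variable R : comNzRingType.

Definition is_ideal (J : R -> Prop) : Prop :=
  [/\ J 0, (forall x y, J x -> J y -> J (x + y)) & (forall r x, J x -> J (r * x))].

Definition is_prime (J : R -> Prop) : Prop :=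
  [/\ is_ideal J, ~ J 1 & (forall x y, J (x * y) -> J x \/ J y)].

Definition ideal_sum (I : R -> Prop) (fs : seq R) (p : R) : Prop :=
  exists g, I g /\ exists cs : seq R, size cs = size fs /\
     p = g + \sum_(i < size fs) cs`_i * fs`_i.

(* fs is a regular sequence on the R-module R/I *)
Definition regular_seq (I : R -> Prop) (fs : seq R) : Prop :=
  (forall i, (i < size fs)%N -> forall g,
      ideal_sum I (take i fs) (fs`_i * g) -> ideal_sum I (take i fs) g)
  /\ ~ ideal_sum I fs 1.

(* a chain P_0 < P_1 < ... < P_h = P of primes of R/I (primes of R containing I) *)
Definition prime_chain (I : R -> Prop) (P : R -> Prop) (h : nat)
    (Ps : nat -> R -> Prop) : Prop :=
  (forall j, (j <= h)%N -> is_prime (Ps j) /\ forall x, I x -> Ps j x)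
  /\ (forall j, (j < h)%N -> (forall x, Ps j x -> Ps j.+1 x) /\
                          exists x, Ps j.+1 x /\ ~ Ps j x)
  /\ (forall x, Ps h x <-> P x).

Definition height_eq (I P : R -> Prop) (h : nat) : Prop :=
  (exists Ps, prime_chain I P h Ps) /\
  (forall h' Ps, prime_chain I P h' Ps -> (h' <= h)%N).

Definition grade_eq (I P : R -> Prop) (h : nat) : Prop :=
  (exists fs, [/\ regular_seq I fs, (forall f, f \in fs -> P f) & size fs = h]) /\
  (forall fs, regular_seq I fs -> (forall f, f \in fs -> P f) -> (size fs <= h)%N).

Definition quotient_CM (I : R -> Prop) : Prop :=
  forall P : R -> Prop, is_prime P -> (forall x, I x -> P x) ->
    exists h, height_eq I P h /\ grade_eq I P h.
End CommAlg.

Definition curve_param (k : fieldType) (n d : nat) (a : nat -> nat) :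
    (n.+1).-tuple {mpoly k[2]} :=
  [tuple ('X_(0 : 'I_2) ^+ a i * 'X_(1 : 'I_2) ^+ (d - a i)) | i < n.+1].

Definition I_A (k : fieldType) (n d : nat) (a : nat -> nat)
    (p : {mpoly k[n.+1]}) : Prop :=
  comp_mpoly (@curve_param k n d a) p = 0.

Definition arith_CM (k : fieldType) (n d : nat) (a : nat -> nat) : Prop :=
  quotient_CM (@I_A k n d a).

Definition inS1 (n : nat) (a : nat -> nat) (y : nat) : Prop :=
  exists c : nat -> nat, y = (\sum_(1 <= i < n.+1) c i * a i)%N.
(* S_2 = <d, d - a_1, ..., d - a_{n-1}> = <d - a_0, ..., d - a_{n-1}> *)
Definition inS2 (n d : nat) (a : nat -> nat) (y : nat) : Prop :=
  exists c : nat -> nat, y = (\sum_(0 <= i < n) c i * (d - a i))%N.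
Definition inS (n d : nat) (a : nat -> nat) (y : nat * nat) : Prop :=
  exists c : nat -> nat, y.1 = (\sum_(0 <= i < n.+1) c i * a i)%N /\
                         y.2 = (\sum_(0 <= i < n.+1) c i * (d - a i))%N.

Definition le1 n a (y z : nat) : Prop := exists w, inS1 n a w /\ z = (y + w)%N.
Definition le2 n d a (y z : nat) : Prop := exists w, inS2 n d a w /\ z = (y + w)%N.
Definition leS n d a (y z : nat * nat) : Prop :=
  exists w, inS n d a w /\ z = ((y.1 + w.1)%N, (y.2 + w.2)%N).

(* AP_S = { y in S : y - a_0 notin S, y - a_n notin S } (differences in Z^2) *)
Definition inAPS n d a (y : nat * nat) : Prop :=
  [/\ inS n d a y,
      ~ (exists w, inS n d a w /\ y = ((w.1 + a 0%N)%N, (w.2 + (d - a 0%N))%N))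
    & ~ (exists w, inS n d a w /\ y = ((w.1 + a n)%N, (w.2 + (d - a n))%N))].

(* Since S_1 and S_2 are the two projections of S, the only issue is to show
   that w in N^2 with w_1 in S_1, w_2 in S_2 and d | w_1 + w_2 lies in S.
   Lifting w_1 and w_2 to S and adding multiples of a_0 = (0, d) and
   a_n = (d, 0) gives (w_1, w_2 + i d) in S and (w_1 + j d, w_2) in S, so it
   suffices that x + a_0, x + a_n in S imply x in S.  In k[C], x_0 is a
   nonzerodivisor and the irrelevant ideal has height 2, hence, k[C] being
   Cohen-Macaulay, it contains a regular sequence f, g.  If x + a_n - a_0 were
   in S but x - a_0 not, a monomial maximal outside I_A + (x_0) would be
   multiplied into I_A + (x_0) by f and g, which the regularity of x_0, f, g
   forbids. *)

From HB Require Import structures.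
From mathcomp Require Import all_boot all_order all_algebra.
From mathcomp Require Import mpoly.
From mathcomp Require Import zify ring.
From Stdlib Require Import Classical.
Set Implicit Arguments. Unset Strict Implicit. Unset Printing Implicit Defensive.
Import GRing.Theory.
Local Open Scope ring_scope.

Section IdealArith.
Variable R : comNzRingType.
Implicit Types (I : R -> Prop) (x f g p : R).

Lemma kernel_is_prime (D : idomainType) (h : {rmorphism R -> D}) :
  is_prime (fun p => h p = 0).
Proof.
split; first split.
- exact: rmorph0.
- by move=> x y hx hy; rewrite rmorphD hx hy addr0.
- by move=> r x hx; rewrite rmorphM hx mulr0.
- by rewrite rmorph1; apply/eqP; rewrite oner_eq0.
- by move=> x y /eqP; rewrite rmorphM mulf_eq0 => /orP[] /eqP; [left | right].
Qed.

Lemma ideal_sum0P I p : ideal_sum I [::] p <-> I p.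
Proof.
split=> [[u [Iu [cs [_ ->]]]] | Ip]; first by rewrite big_ord0 addr0.
by exists p; split=> //; exists [::]; rewrite big_ord0 addr0.
Qed.

Lemma ideal_sum1P I x p : ideal_sum I [:: x] p <-> exists u c, I u /\ p = u + c * x.
Proof.
split=> [[u [Iu [cs [_ ->]]]] | [u [c [Iu ->]]]].
  by exists u, cs`_0; rewrite big_ord1.
by exists u; split=> //; exists [:: c]; rewrite big_ord1.
Qed.

Lemma ideal_sum1_ideal I x : is_ideal I -> is_ideal (ideal_sum I [:: x]).
Proof.
case=> I0 ID IM; split.
- by apply/ideal_sum1P; exists 0, 0; rewrite mul0r addr0.
- move=> p q /ideal_sum1P[u [c [Iu ->]]] /ideal_sum1P[v [e [Iv ->]]].
  by apply/ideal_sum1P; exists (u + v), (c + e); split; [exact: ID | ring].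
- move=> r p /ideal_sum1P[u [c [Iu ->]]].
  by apply/ideal_sum1P; exists (r * u), (r * c); split; [exact: IM | ring].
Qed.

Lemma regular_seq_cons2 I f g fs : regular_seq I [:: f, g & fs] ->
  (forall p, I (f * p) -> I p) /\
  (forall p, ideal_sum I [:: f] (g * p) -> ideal_sum I [:: f] p).
Proof.
case=> reg _; split=> p.
- by move=> /ideal_sum0P /(reg 0%N isT) /ideal_sum0P.
- exact: (reg 1%N isT).
Qed.

Lemma ideal_sum1_colon_regular I x f g p : is_ideal I ->
  (forall q, I (x * q) -> I q) -> (forall q, I (f * q) -> I q) ->
  (forall q, ideal_sum I [:: f] (g * q) -> ideal_sum I [:: f] q) ->
  ideal_sum I [:: x] (f * p) -> ideal_sum I [:: x] (g * p) ->
  ideal_sum I [:: x] p.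
Proof.
case=> _ ID IM regx regf regg /ideal_sum1P[u1 [c1 [Iu1 e1]]].
move=> /ideal_sum1P[u2 [c2 [Iu2 e2]]].
have IN q : I q -> I (- q) by move=> Iq; rewrite -mulN1r; exact: IM.
have /regg /ideal_sum1P[u3 [c3 [Iu3 e3]]] : ideal_sum I [:: f] (g * c1).
  apply/ideal_sum1P; exists (g * c1 - f * c2), c2; split; last by ring.
  apply: regx; have -> : x * (g * c1 - f * c2) = f * u2 - g * u1.
    have E1 : c1 * x = f * p - u1 by rewrite e1; ring.
    have E2 : c2 * x = g * p - u2 by rewrite e2; ring.
    by transitivity (g * (c1 * x) - f * (c2 * x)); [ring | rewrite E1 E2; ring].
  by apply: ID; [exact: IM | apply: IN; exact: IM].
apply/ideal_sum1P; exists (p - c3 * x), c3; split; last by ring.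
apply: regf; have -> : f * (p - c3 * x) = u1 + x * u3.
  by transitivity (f * p - c3 * f * x); [ring | rewrite e1 e3; ring].
by apply: ID => //; exact: IM.
Qed.

End IdealArith.

Lemma mpolyX_neq0 (R : nzRingType) n (m : 'X_{1..n}) : ('X_[m] : {mpoly R[n]}) != 0.
Proof.
by apply/eqP => /(congr1 (mcoeff m)); rewrite mcoeffX eqxx mcoeff0 => /eqP; rewrite oner_eq0.
Qed.

Lemma mnm_gt0 n (t : 'X_{1..n}) : t != 0%MM -> exists i, (0 < t i)%N.
Proof.
move=> /eqP nz; apply: NNPP => /not_ex_all_not pos; apply: nz.
by apply/mnmP => i; rewrite mnm0E; move: (pos i); lia.
Qed.

Lemma exists_coord_ge n d (t : 'X_{1..n}) : (n * d.-1 < mdeg t)%N ->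
  exists i, (d <= t i)%N.
Proof.
move=> tbig; apply: NNPP => /not_ex_all_not small; move: tbig.
rewrite mdegE -[n in (n * _)%N]card_ord -sum_nat_const ltnNge => /negP; apply.
by apply: leq_sum => i _; move/negP: (small i); rewrite -ltnNge; lia.
Qed.

Lemma exists_socle_mnm n (P : 'X_{1..n} -> Prop) K m :
  ~ P m -> (forall t, (K <= mdeg t)%N -> P (m + t)%MM) ->
  exists m', ~ P m' /\ forall i, P (m' + U_(i))%MM.
Proof.
elim: K m => [|K IH] m Pm big; first by rewrite -[m]addm0 in Pm; case: Pm; exact: big.
have [Pall|/not_all_ex_not[i Pi]] := classic (forall i, P (m + U_(i))%MM).
  by exists m.
apply: IH Pi _ => t tK; rewrite -addmA; apply: big.
by rewrite mdegD mdeg1.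
Qed.

Lemma mcoeff0_comp_mpoly (R : comNzRingType) n m (lq : n.-tuple {mpoly R[m]})
    (p : {mpoly R[n]}) :
  (forall i, (tnth lq i)@_0 = 0) -> (p \mPo lq)@_0 = p@_0.
Proof.
move=> lq0; rewrite comp_mpolyEX {3}(mpolyE p) !raddf_sum /=.
apply: eq_bigr => m' _; rewrite !mcoeffZ comp_mpolyX mpolyXE_id.
by rewrite !(rmorph_prod (mcoeff 0)); congr (_ * _); apply: eq_bigr => i _;
  rewrite !rmorphXn /= lq0 mcoeffX mnm1_eq0.
Qed.

Lemma incr_lt_last (f : nat -> nat) N :
  (forall i, (i < N)%N -> (f i < f i.+1)%N) -> forall i, (i < N)%N -> (f i < f N)%N.
Proof.
elim: N => // N IH incr i; rewrite ltnS leq_eqVlt => /orP[/eqP ->|iN]; first exact: incr.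
by apply: ltn_trans (incr N _) => //; apply: IH iN => j /leqW; apply: incr.
Qed.

Lemma exists_shift d x p y : (0 < d)%N -> (d %| x + p)%N -> (d %| x + y)%N ->
  exists i, (p + y * d = y + i * d)%N.
Proof.
move=> d_gt0 dp dy; exists ((p + y * d - y) %/ d)%N.
have y_le : (y <= p + y * d)%N by rewrite (leq_trans (leq_pmulr y d_gt0)) ?leq_addl.
rewrite divnK ?subnKC //.
have -> : (p + y * d - y = (x + p + y * d) - (x + y))%N by lia.
by rewrite dvdn_sub // dvdn_add // dvdn_mull.
Qed.

Section MonomialCurve.
Variables (k : fieldType) (n d : nat) (a : nat -> nat).

Local Notation R := {mpoly k[n.+1]}.
Local Notation phi := (comp_mpoly (curve_param k n d a)).
Local Notation inS := (inS n d a).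
Local Notation I := (@I_A k n d a).
Local Notation J := (ideal_sum I [:: 'X_ord0]).

Definition mnm2 (y : nat * nat) : 'X_{1..2} :=
  [multinom (if i == 0 :> nat then y.1 else y.2) | i < 2].

Definition sdeg (m : 'X_{1..n.+1}) : nat * nat :=
  (\sum_(i < n.+1) m i * a i, \sum_(i < n.+1) m i * (d - a i))%N.

Lemma mnm2_inj : injective mnm2.
Proof.
move=> [y1 y2] [z1 z2] /mnmP e.
by move: (e 0) (e 1); rewrite !mnmE /= => -> ->.
Qed.

Lemma mnm2D y z : mnm2 (y.1 + z.1, y.2 + z.2)%N = (mnm2 y + mnm2 z)%MM.
Proof. by apply/mnmP => i; rewrite mnmDE !mnmE; case: ifP. Qed.

Lemma sdegD m1 m2 :
  sdeg (m1 + m2) = ((sdeg m1).1 + (sdeg m2).1, (sdeg m1).2 + (sdeg m2).2)%N.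
Proof. by congr pair; rewrite -big_split; apply: eq_bigr => i _; rewrite mnmDE mulnDl. Qed.

Lemma sdegU (i : 'I_n.+1) : sdeg U_(i) = (a i, d - a i)%N.
Proof.
by congr pair; rewrite (bigD1 i) //= big1 ?addn0 ?mnm1E ?eqxx ?mul1n // => j ne;
  rewrite mnm1E eq_sym (negbTE ne).
Qed.

Lemma sdegMn m c : sdeg (m *+ c) = (c * (sdeg m).1, c * (sdeg m).2)%N.
Proof.
by congr pair; rewrite big_distrr; apply: eq_bigr => i _; rewrite mulmnE mulnAC mulnC.
Qed.

Lemma comp_curve_paramX m : phi 'X_[m] = 'X_[mnm2 (sdeg m)].
Proof.
rewrite comp_mpolyX (eq_bigr (fun i => 'X_[mnm2 (sdeg U_(i))] ^+ m i)) => [|i _].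
  rewrite mprodXnE; congr 'X_[_]; apply/mnmP => j.
  rewrite mnm_sumE !mnmE; case: ifP => j0; apply: eq_bigr => i _;
    by rewrite mulmnE sdegU mnmE j0 mulnC.
rewrite tnth_mktuple sdegU; congr (_ ^+ _); rewrite !mpolyXn -mpolyXD; congr 'X_[_].
by apply/mnmP => j; rewrite mnmDE !mulmnE !mnm1E !mnmE; case: j => [[|[|j]] ?] /=; lia.
Qed.

Lemma inS_sdegP y : inS y <-> exists m, y = sdeg m.
Proof.
split=> [[c [e1 e2]] | [m ->]].
  exists [multinom c i | i < n.+1]; rewrite [y]surjective_pairing e1 e2 !big_mkord.
  by congr pair; apply: eq_bigr => i _; rewrite mnmE.
by exists (fun i => m (inord i)); rewrite !big_mkord; split;
  apply: eq_bigr => i _; rewrite inord_val.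
Qed.

Lemma inS_sdeg m : inS (sdeg m).
Proof. by apply/inS_sdegP; exists m. Qed.

Lemma inS_add y z : inS y -> inS z -> inS (y.1 + z.1, y.2 + z.2)%N.
Proof.
move=> /inS_sdegP[m ->] /inS_sdegP[t ->].
by apply/inS_sdegP; exists (m + t)%MM; rewrite sdegD.
Qed.

(* sdeg m - a_0 lies in S, i.e. X^m lies in I_A + (x_0). *)
Definition in_a0S m := exists t, sdeg m = sdeg (U_(ord0) + t).

Lemma in_a0S_addr m t : in_a0S m -> in_a0S (m + t).
Proof. by case=> t' e; exists (t' + t)%MM; rewrite addmA !(sdegD _ t) e. Qed.

Lemma I_A_prime : is_prime I.
Proof. exact: kernel_is_prime. Qed.

Lemma I_A_cancelX m q : I ('X_[m] * q) -> I q.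
Proof.
rewrite /I_A rmorphM /= comp_curve_paramX => /eqP.
by rewrite mulf_eq0 (negbTE (mpolyX_neq0 _ _)) => /eqP.
Qed.

Lemma msupp_comp_curve q t : t \in msupp (phi q) -> exists m, t = mnm2 (sdeg m).
Proof.
rewrite mcoeff_msupp comp_mpolyEX raddf_sum /= => /eqP nz.
apply: NNPP => /not_ex_all_not nt; apply: nz; apply: big1 => m _.
by rewrite mcoeffZ comp_curve_paramX mcoeffX; case: eqP (nt m) => [->|_] //; rewrite mulr0.
Qed.

Lemma ideal_sum_x0_mpolyXP m : J 'X_[m] <-> in_a0S m.
Proof.
split=> [/ideal_sum1P[u [c [Iu e]]] | [t e]].
  have : mnm2 (sdeg m) \in msupp (phi c * 'X_[mnm2 (sdeg U_(ord0))]).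
    have /= := congr1 phi e; rewrite rmorphD rmorphM /= Iu add0r !comp_curve_paramX => <-.
    by rewrite mcoeff_msupp mcoeffX eqxx oner_neq0.
  rewrite (perm_mem (msuppMX _ _)) => /mapP[s /msupp_comp_curve[t ->] em].
  by exists t; apply: mnm2_inj; rewrite em sdegD mnm2D.
apply/ideal_sum1P; exists ('X_[m] - 'X_[t] * 'X_ord0), 'X_[t]; split; last by rewrite subrK.
by rewrite /I_A rmorphB rmorphM /= !comp_curve_paramX -mpolyXD -mnm2D -sdegD addmC e subrr.
Qed.

Lemma ideal_sum_x0_mulX m f :
  (forall i, in_a0S (m + U_(i))) -> f@_0 = 0 -> J (f * 'X_[m]).
Proof.
move=> top f0; have [I_ideal _ _] := I_A_prime.
have [J0 JD JM] := ideal_sum1_ideal 'X_ord0 I_ideal.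
rewrite (mpolyE f) big_distrl /=; apply: (big_ind J) => // t _.
have [->|/mnm_gt0[i ti]] := eqVneq t 0%MM; first by rewrite f0 scale0r mul0r.
rewrite -scalerAl -mul_mpolyC -mpolyXD; apply: JM; apply/ideal_sum_x0_mpolyXP.
have -> : (t + m = (m + U_(i)) + (t - U_(i)))%MM.
  by apply/mnmP => j; rewrite !mnmDE mnmBE mnm1E; case: eqP => [<-|_] /=; lia.
exact: in_a0S_addr.
Qed.

Hypotheses (d_gt0 : (0 < d)%N) (a0 : a 0%N = 0%N) (an : a n = d)
  (a_lt : forall i, (i < n)%N -> (a i < d)%N).

Lemma a_le_d (i : 'I_n.+1) : (a i <= d)%N.
Proof.
by have := ltn_ord i; rewrite ltnS leq_eqVlt => /orP[/eqP ->|/a_lt/ltnW]; rewrite ?an.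
Qed.

Lemma sdeg_sum m : ((sdeg m).1 + (sdeg m).2 = mdeg m * d)%N.
Proof.
rewrite mdegE big_distrl -big_split /=; apply: eq_bigr => i _.
by rewrite -mulnDr subnKC ?a_le_d.
Qed.

Lemma inS_dvd y : inS y -> (d %| y.1 + y.2)%N.
Proof. by move=> /inS_sdegP[m ->]; rewrite sdeg_sum dvdn_mull. Qed.

Lemma inS_addl K y1 y2 : inS (y1, y2) -> inS (y1 + K * d, y2)%N.
Proof.
move=> /inS_add /(_ (inS_sdeg (U_(ord_max) *+ K))).
by rewrite sdegMn sdegU /= an subnn muln0 addn0 mulnC.
Qed.

Lemma inS_addr K y1 y2 : inS (y1, y2) -> inS (y1, y2 + K * d)%N.
Proof.
move=> /inS_add /(_ (inS_sdeg (U_(ord0) *+ K))).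
by rewrite sdegMn sdegU /= a0 subn0 muln0 addn0 mulnC.
Qed.

Lemma inS1_liftP w1 : inS1 n a w1 <-> exists w2, inS (w1, w2).
Proof.
split=> [[c e] | [w2 [c [/= e _]]]]; last by exists c; rewrite e big_ltn // a0 muln0.
exists (\sum_(0 <= i < n.+1) c i * (d - a i))%N; exists c; split=> //=.
by rewrite big_ltn // a0 muln0 -e.
Qed.

Lemma inS2_liftP w2 : inS2 n d a w2 <-> exists w1, inS (w1, w2).
Proof.
split=> [[c e] | [w1 [c [_ /= e]]]]; last first.
  by exists c; rewrite e big_nat_recr //= an subnn muln0 addn0.
exists (\sum_(0 <= i < n.+1) c i * a i)%N; exists c; split=> //=.
by rewrite e big_nat_recr //= an subnn muln0 addn0.
Qed.

Lemma inS_shift_snd y1 p y2 : inS (y1, p) -> (d %| y1 + y2)%N ->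
  exists i, inS (y1, y2 + i * d)%N.
Proof.
move=> S dvd; have [i e] := exists_shift d_gt0 (inS_dvd S) dvd.
by exists i; rewrite -e; apply: inS_addr.
Qed.

Lemma inS_shift_fst p y1 y2 : inS (p, y2) -> (d %| y1 + y2)%N ->
  exists j, inS (y1 + j * d, y2)%N.
Proof.
move=> S; rewrite addnC => dvd.
have dS : (d %| y2 + p)%N by rewrite addnC; exact: inS_dvd S.
have [j e] := exists_shift d_gt0 dS dvd.
by exists j; rewrite -e; apply: inS_addl.
Qed.

Lemma in_a0S_Ud (i : 'I_n.+1) : (i < n)%N -> in_a0S (U_(i) *+ d).
Proof.
move=> /a_lt ai; exists (U_(ord_max) *+ a i + U_(ord0) *+ (d - a i).-1)%MM.
by rewrite !sdegD !sdegMn !sdegU /= an a0 subnn; congr pair; nia.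
Qed.

Lemma in_a0S_large m : in_a0S (m + U_(ord_max)) ->
  forall t, (n.+1 * d.-1 < mdeg t)%N -> in_a0S (m + t).
Proof.
move=> top t /exists_coord_ge[i ti].
have [ei | /eqP ne] := eqVneq i ord_max.
  rewrite ei in ti.
  have -> : (m + t = (m + U_(ord_max)) + (t - U_(ord_max)))%MM.
    by apply/mnmP => j; rewrite !mnmDE mnmBE mnm1E; case: eqP => [<-|_] /=; lia.
  exact: in_a0S_addr.
have lt_in : (i < n)%N.
  by rewrite ltn_neqAle -ltnS ltn_ord andbT; apply/eqP => e; apply/ne/val_inj.
have -> : (m + t = U_(i) *+ d + (m + t - U_(i) *+ d))%MM.
  by apply/mnmP => j; rewrite !mnmDE mnmBE mnmDE mulmnE mnm1E; case: eqP => [<-|_] /=; lia.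
exact/in_a0S_addr/in_a0S_Ud.
Qed.

(* A monomial maximal outside I_A + (x_0) is sent into it by f and g. *)
Lemma in_a0S_cancel_xn f g : f@_0 = 0 -> g@_0 = 0 ->
    (forall q, I (f * q) -> I q) ->
    (forall q, ideal_sum I [:: f] (g * q) -> ideal_sum I [:: f] q) ->
  forall m, in_a0S (m + U_(ord_max)) -> in_a0S m.
Proof.
move=> f0 g0 regf regg m top; apply: NNPP => out.
have [s [outs tops]] := exists_socle_mnm out (in_a0S_large top).
have [I_ideal _ _] := I_A_prime.
apply/outs/ideal_sum_x0_mpolyXP.
by apply: (ideal_sum1_colon_regular I_ideal (@I_A_cancelX _) regf regg);
  apply: ideal_sum_x0_mulX.
Qed.

Lemma mcoeff0_comp_curve p : (phi p)@_0 = p@_0.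
Proof.
apply: mcoeff0_comp_mpoly => i; rewrite tnth_mktuple rmorphM !rmorphXn /= !mcoeffX.
rewrite !mnm1_eq0 !expr0n; have := a_le_d i; case: (a i) => [|ai] /=; last by rewrite mul0r.
by rewrite subn0 mul1r eqn0Ngt d_gt0.
Qed.

Local Notation eval_v0 :=
  (comp_mpoly [tuple 'X_(0 : 'I_2); 0] : {mpoly k[2]} -> {mpoly k[2]}).

Lemma eval_v0X y : eval_v0 'X_[mnm2 y] = 'X_0 ^+ y.1 * 0 ^+ y.2.
Proof. by rewrite comp_mpolyX !big_ord_recl big_ord0 mulr1 /tnth /= !mnmE. Qed.

Lemma mcoeff0_eval_v0 q : (eval_v0 q)@_0 = q@_0.
Proof.
by apply: mcoeff0_comp_mpoly => -[[|[|i]] //= ?]; rewrite /tnth /= ?mcoeffX ?mnm1_eq0 ?mcoeff0.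
Qed.

(* I_A, the ideal of the point [0 : ... : 0 : 1] of C, and the irrelevant ideal. *)
Definition curve_chain (j : nat) : R -> Prop :=
  match j with
  | 0 => I
  | 1 => fun p => (eval_v0 \o phi) p = 0
  | _ => fun p => p@_0 = 0
  end.

Lemma prime_chain_curve : prime_chain I (fun p => p@_0 = 0) 2 curve_chain.
Proof.
have phiX0 : phi 'X_ord0 = 'X_[mnm2 (0, d)] by rewrite comp_curve_paramX sdegU a0 subn0.
have phiXn : phi 'X_ord_max = 'X_[mnm2 (d, 0)] by rewrite comp_curve_paramX sdegU an subnn.
split; [|split] => //.
- case=> [|[|[|j]]] //= _; split.
  + exact: I_A_prime.
  + by [].
  + exact: (kernel_is_prime (eval_v0 \o phi)).
  + by move=> p /= ->; rewrite rmorph0.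
  + exact: (kernel_is_prime (mcoeff 0)).
  + by move=> p Ip; rewrite -mcoeff0_comp_curve Ip mcoeff0.
- case=> [|[|j]] //= _; split.
  + by move=> p ->; rewrite rmorph0.
  + exists 'X_ord0; rewrite phiX0 eval_v0X expr0n eqn0Ngt d_gt0 mulr0; split=> //.
    by apply/eqP; rewrite /I_A phiX0 mpolyX_neq0.
  + by move=> p /= e; rewrite -mcoeff0_comp_curve -mcoeff0_eval_v0 e mcoeff0.
  + exists 'X_ord_max; rewrite mcoeffX mnm1_eq0 phiXn eval_v0X expr0 mulr1; split=> //.
    by apply/eqP; rewrite mpolyXn mpolyX_neq0.
Qed.

Lemma aCM_regular_pair : arith_CM k n d a -> exists f g : R,
  [/\ f@_0 = 0, g@_0 = 0, forall q, I (f * q) -> I q &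
      forall q, ideal_sum I [:: f] (g * q) -> ideal_sum I [:: f] q].
Proof.
have [irr_prime I_irr] := prime_chain_curve.1 2%N isT.
move=> /(_ _ irr_prime I_irr)[h [[_ hmax] [[fs [reg fs_irr size_fs]] _]]].
have := hmax 2%N curve_chain prime_chain_curve.
case: fs reg fs_irr size_fs => [|f [|g fs]] reg fs_irr <- //= _.
have [regf regg] := regular_seq_cons2 reg.
by exists f, g; split=> //; apply: fs_irr; rewrite !inE eqxx ?orbT.
Qed.

Lemma aCM_inS_cancel : arith_CM k n d a ->
  forall y1 y2, inS (y1, y2 + d)%N -> inS (y1 + d, y2)%N -> inS (y1, y2).
Proof.
move=> /aCM_regular_pair[f [g [f0 g0 regf regg]]] y1 y2.
move=> /inS_sdegP[m e] /inS_sdegP[t e'].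
have /(in_a0S_cancel_xn f0 g0 regf regg)[s es] : in_a0S (m + U_(ord_max)).
  by exists t; rewrite !sdegD !sdegU -e -e' /= an a0 subnn subn0; congr pair; lia.
apply/inS_sdegP; exists s; move: es; rewrite sdegD sdegU -e a0 subn0 /=.
by case=> -> e2; rewrite /sdeg add0n; congr pair; apply/(@addIn d); rewrite e2 addnC.
Qed.

Lemma aCM_inS_cancel_mul : arith_CM k n d a ->
  forall y1 y2 i j, inS (y1, y2 + i * d)%N -> inS (y1 + j * d, y2)%N -> inS (y1, y2).
Proof.
move=> CM y1 y2 i j.
have cancel1 y : inS (y1, y + d)%N -> inS (y1 + j * d, y)%N -> inS (y1, y).
  elim: j => [|j IH] S0 Sj; first by rewrite mul0n addn0 in Sj.
  apply: (IH S0); apply: aCM_inS_cancel => //; first exact: inS_addl S0.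
  by rewrite -addnA -mulSnr.
elim: i y2 => [|i IH] y2 Si Sj; first by rewrite mul0n addn0 in Si.
apply: (cancel1 _ _ Sj); apply: IH; first by rewrite -addnA -mulSn.
by have := inS_addr 1 Sj; rewrite mul1n.
Qed.

Lemma aCM_inS_of_lifts : arith_CM k n d a -> forall w1 w2 p q,
  inS (w1, p) -> inS (q, w2) -> (d %| w1 + w2)%N -> inS (w1, w2).
Proof.
move=> CM w1 w2 p q S1 S2 dvd.
have [i Si] := inS_shift_snd S1 dvd; have [j Sj] := inS_shift_fst S2 dvd.
exact: aCM_inS_cancel_mul Si Sj.
Qed.

Lemma aCM_leS_iff : arith_CM k n d a -> forall y z, inS y -> inS z ->
  leS n d a y z <-> le1 n a y.1 z.1 /\ le2 n d a y.2 z.2.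
Proof.
move=> CM y z Sy Sz; split.
- case=> -[w1 w2] [Sw ->]; split.
  + by exists w1; split=> //; apply/inS1_liftP; exists w2.
  + by exists w2; split=> //; apply/inS2_liftP; exists w1.
- case=> -[w1 [/inS1_liftP[p Sp] e1]] [w2 [/inS2_liftP[q Sq] e2]].
  exists (w1, w2); split; last by rewrite -e1 -e2 -surjective_pairing.
  apply: (aCM_inS_of_lifts CM Sp Sq).
  by have := inS_dvd Sz; rewrite e1 e2 addnACA dvdn_addr // (inS_dvd Sy).
Qed.

End MonomialCurve.

Theorem mainTheorem1 (k : fieldType) (n d : nat) (a : nat -> nat)
  (k_inf : forall s : seq k, exists x : k, x \notin s)
  (d_pos : (1 <= d)%N)
  (a0 : a 0%N = 0%N) (an : a n = d)
  (a_incr : forall i, (i < n)%N -> (a i < a i.+1)%N)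
  (a_gcd : \big[gcdn/0%N]_(1 <= i < n.+1) a i = 1%N)
  (hCM : arith_CM k n d a) :
  forall y z : nat * nat, inAPS n d a y -> inAPS n d a z ->
    (leS n d a y z <-> le1 n a y.1 z.1 /\ le2 n d a y.2 z.2).
Proof.
have a_lt i : (i < n)%N -> (a i < d)%N by rewrite -an; apply: incr_lt_last.
by move=> y z [Sy _ _] [Sz _ _]; exact: (aCM_leS_iff d_pos a0 an a_lt hCM Sy Sz).
Qed.
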